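(* Let $z,z',\ell \in \mathbb{N}$ and let $x\in \mathbb{R}^{z}$ and $x'\in \mathbb{R}^{z'}$ be two time series with the same set of $\ell$-profiles, i.e. $D_{(x,\ell)} = D_{(x',\ell)}$. Then for every $y \in \mathbb{R}^\ell$ we have $\mathbf{d}_{dF}(x,y) = \mathbf{d}_{dF}(x',y)$.
   Context: A traversal between sequences of lengths $z$ and $\ell$ is a sequence of index pairs $(i_1,j_1),\dots,(i_t,j_t)$ with $(i_1,j_1)=(1,1)$, $(i_t,j_t)=(z,\ell)$, and for $r<t$: $i_{r+1}-i_r\in\{0,1\}$, $j_{r+1}-j_r\in\{0,1\}$, $(i_{r+1}-i_r)+(j_{r+1}-j_r)\ge1$; $\mathcal{T}_{z,\ell}$ is the set of traversals. For $x\in\mathbb{R}^z$, $y\in\mathbb{R}^\ell$: $\mathbf{d}_{dF}(x,y)=\min_{T\in\mathcal{T}_{z,\ell}}\max_{(i,j)\in T}|x_i-y_j|$. For $x\in\mathbb{R}^z$ and $T\in\mathcal{T}_{z,\ell}$, the traversal sectors are $S_j^{(x,T)}=\{x_i: i\in[z],(i,j)\in T\}$ for $j\in[\ell]$, and the $\ell$-profile of $(x,T)$ is the sequence $\big((\min S_1^{(x,T)},\max S_1^{(x,T)}),\dots,(\min S_\ell^{(x,T)},\max S_\ell^{(x,T)})\big)$. $D_{(x,\ell)}$ is the set of all $\ell$-profiles of $(x,T)$ over all $T\in\mathcal{T}_{z,\ell}$. *)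

From HB Require Import structures.
From mathcomp Require Import all_boot all_order all_algebra.
From mathcomp Require Import classical_sets reals.
Set Implicit Arguments. Unset Strict Implicit. Unset Printing Implicit Defensive.
Import Order.TTheory GRing.Theory Num.Theory.
Local Open Scope ring_scope.
Local Open Scope classical_set_scope.

(* Indices are 0-based: the paper's index i in [z] is the ordinal i-1 : 'I_z. *)

Definition trav_step (z l : nat) (a b : 'I_z * 'I_l) : bool :=
  [&& (a.1 <= b.1)%N, (b.1 <= a.1.+1)%N, (a.2 <= b.2)%N, (b.2 <= a.2.+1)%N
    & a != b].

Definition is_traversal (z l : nat) (T : seq ('I_z * 'I_l)) : bool :=
  if T is p :: T' then
    [&& (p.1 == 0 :> nat), (p.2 == 0 :> nat),
        ((last p T').1 == z.-1 :> nat), ((last p T').2 == l.-1 :> nat)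
      & path (@trav_step z l) p T']
  else false.

(* max_{(i,j) in T} |x_i - y_j|  (all terms are >= 0, T is nonempty) *)
Definition trav_cost (R : realType) (z l : nat) (x : 'I_z -> R) (y : 'I_l -> R)
  (T : seq ('I_z * 'I_l)) : R :=
  \big[Num.max/0]_(p <- T) `|x p.1 - y p.2|.

(* discrete Frechet distance: minimum of the costs over all traversals
   (the set of traversals is finite and nonempty, so inf = min) *)
Definition dF (R : realType) (z l : nat) (x : 'I_z -> R) (y : 'I_l -> R) : R :=
  inf [set c | exists T : seq ('I_z * 'I_l), is_traversal T /\ c = trav_cost x y T].

Definition sector (R : realType) (z l : nat) (x : 'I_z -> R)
  (T : seq ('I_z * 'I_l)) (j : 'I_l) : seq R :=
  [seq x p.1 | p <- T & p.2 == j].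

Definition seq_min (R : realType) (s : seq R) : R :=
  \big[Num.min/head 0 s]_(v <- s) v.
Definition seq_max (R : realType) (s : seq R) : R :=
  \big[Num.max/head 0 s]_(v <- s) v.

Definition profile (R : realType) (z l : nat) (x : 'I_z -> R)
  (T : seq ('I_z * 'I_l)) : {ffun 'I_l -> R * R} :=
  [ffun j => (seq_min (sector x T j), seq_max (sector x T j))].

Definition profiles (R : realType) (z : nat) (x : 'I_z -> R) (l : nat)
  : set {ffun 'I_l -> R * R} :=
  [set P | exists T : seq ('I_z * 'I_l), is_traversal T /\ P = profile x T].
Arguments profiles {R z} x l.

(* The cost of a traversal depends only on its profile.  Every column j is
   visited, so the sector S_j is nonempty, and on an interval [a, b] the
   distance to a point c is largest at an endpoint; hence
   max_(v in S_j) |v - y_j| = max (|min S_j - y_j|, |max S_j - y_j|).  The set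
   of traversal costs is therefore the image of D_(x,l) under a map depending
   only on y, and equal profile sets give equal minima. *)

From mathcomp Require Import all_boot all_order all_algebra.
From mathcomp Require Import classical_sets reals.
From mathcomp Require Import zify.
Set Implicit Arguments. Unset Strict Implicit. Unset Printing Implicit Defensive.
Import Order.TTheory GRing.Theory Num.Theory.
Local Open Scope ring_scope.
Local Open Scope classical_set_scope.

Lemma path_hits_between (T : eqType) (e : rel T) (f : T -> nat) :
  (forall a b, e a b -> (f b <= (f a).+1)%N) ->
  forall p s j, path e p s -> (f p <= j <= f (last p s))%N ->
  exists2 q, q \in p :: s & f q = j.
Proof.
move=> e_step p s; elim: s p => [|b s IH] p j /=.
  by move=> _ /andP[pj jp]; exists p; rewrite ?mem_head //; lia.
case/andP=> /e_step fb fs /andP[pj js]; case: (leqP j (f p)) => [jp | pj_lt].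
  by exists p; rewrite ?mem_head //; lia.
have [|q qs <-] := IH b j fs; first by apply/andP; split=> //; lia.
by exists q; rewrite // in_cons qs orbT.
Qed.

Section SeqMinMax.
Variable R : realType.
Implicit Types (s : seq R) (a b c v : R).

Lemma dist_le_max_endpoints a b c v : a <= v <= b ->
  `|v - c| <= Num.max `|a - c| `|b - c|.
Proof.
case/andP=> av vb; rewrite le_max; case: (lerP c v) => [cv | vc].
  by rewrite [X in _ || X]ler_normr lerD2r vb orbT.
by rewrite ler_normr opprB lerD2l lerN2 av orbT.
Qed.

Lemma seq_min_le s v : v \in s -> seq_min s <= v.
Proof. by move=> sv; apply: ge_bigmin_seq. Qed.

Lemma seq_max_ge s v : v \in s -> v <= seq_max s.
Proof. by move=> sv; apply: le_bigmax_seq. Qed.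

Lemma seq_min_mem s : s != [::] -> seq_min s \in s.
Proof.
case: s => // a s _; rewrite /seq_min big_seq.
by elim/big_ind: _ => [|u w|//]; rewrite ?mem_head // minEle; case: ifP.
Qed.

Lemma seq_max_mem s : s != [::] -> seq_max s \in s.
Proof.
case: s => // a s _; rewrite /seq_max big_seq.
by elim/big_ind: _ => [|u w|//]; rewrite ?mem_head // maxEle; case: ifP.
Qed.

End SeqMinMax.

Section Traversal.
Variables (R : realType) (z l : nat) (x : 'I_z -> R) (y : 'I_l -> R).
Implicit Types (T : seq ('I_z * 'I_l)) (j : 'I_l).

Lemma traversal_hits_column T j :
  is_traversal T -> exists2 p, p \in T & p.2 = j.
Proof.
case: T => // p T /and5P[_ p2_0 _ last2 Tpath].
have [||q qT qj] := path_hits_between (f := fun q => val q.2) _ Tpath (j := j).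
- by move=> a b /and5P[].
- by rewrite /= (eqP p2_0) (eqP last2); have := ltn_ord j; lia.
by exists q => //; apply: val_inj.
Qed.

Lemma sectorP T j v :
  reflect (exists2 p, p \in T & p.2 = j /\ x p.1 = v) (v \in sector x T j).
Proof.
apply: (iffP mapP) => [[p] | [p pT [pj <-]]].
  by rewrite mem_filter => /andP[/eqP pj pT] ->; exists p.
by exists p; rewrite // mem_filter pj eqxx.
Qed.

Lemma sector_neq0 T j : is_traversal T -> sector x T j != [::].
Proof.
case/(traversal_hits_column j) => p pT pj.
have : x p.1 \in sector x T j by apply/sectorP; exists p.
by case: (sector x T j).
Qed.

Definition profile_cost (P : {ffun 'I_l -> R * R}) : R :=
  \big[Num.max/0]_j Num.max `|(P j).1 - y j| `|(P j).2 - y j|.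

Lemma trav_cost_profile T :
  is_traversal T -> trav_cost x y T = profile_cost (profile x T).
Proof.
move=> Ttrav; apply/le_anti/andP; split.
  rewrite /trav_cost big_seq.
  apply: bigmax_le => [|p pT]; first exact: bigmax_ge_id.
  apply: le_trans (le_bigmax _ _ p.2); rewrite ffunE /=.
  have Sp : x p.1 \in sector x T p.2 by apply/sectorP; exists p.
  by apply: dist_le_max_endpoints; rewrite seq_min_le ?seq_max_ge.
apply: bigmax_le => [|j _]; first exact: bigmax_ge_id.
have cost_ge v : v \in sector x T j -> `|v - y j| <= trav_cost x y T.
  case/sectorP=> p pT [<- <-].
  exact: (le_bigmax_seq _ _ _ (fun q => `|x q.1 - y q.2|) pT).
by rewrite ffunE ge_max !cost_ge ?seq_min_mem ?seq_max_mem ?sector_neq0.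
Qed.

Lemma dF_profile_cost : dF x y = inf (profile_cost @` profiles x l).
Proof.
congr inf; apply/seteqP; split=> c.
  case=> T [Ttrav ->]; exists (profile x T); first by exists T.
  by rewrite trav_cost_profile.
by case=> _ [T [Ttrav ->]] <-; exists T; rewrite trav_cost_profile.
Qed.

End Traversal.

Theorem lemma9p9 (R : realType) (z z' l : nat) (x : 'I_z -> R) (x' : 'I_z' -> R) :
  profiles x l = profiles x' l ->
  forall y : 'I_l -> R, dF x y = dF x' y.
Proof. by move=> Dxx' y; rewrite !dF_profile_cost Dxx'. Qed.
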